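(* Fix $c, r, \epsilon > 0$ and let $\alpha(\epsilon) = \frac{e^{\epsilon}+1}{e^{\epsilon}-1}$. A binary-output stochastic quantizer is a stochastic mapping $Q : [c-r, c+r] \to \{\gamma_1, \gamma_2\}$, where $\gamma_1, \gamma_2 \in \mathbb{R}$. Consider the following conditions on such a quantizer: (C1) Unbiasedness: $\mathbb{E}(Q(w)) = w$ for all $w \in [c-r, c+r]$; (C2) $\epsilon$-PLDP: $\frac{P(Q(w) = \overline{w})}{P(Q(w') = \overline{w})} \le e^{\epsilon}$ for all $\overline{w} \in \{\gamma_1, \gamma_2\}$ and all $w, w' \in [c-r, c+r]$; (C3) Minimal MSE: $\mathbb{E}((Q(w) - w)^2)$ is minimized for every $w \in [c-r, c+r]$. Define the quantizer $Q(w) = c + U r \alpha(\epsilon)$ for $w \in [c-r, c+r]$, where $U$ is a $\{-1, 1\}$-valued random variable with $P(U = 1) = \frac{1}{2} + \frac{w - c}{2 r \alpha(\epsilon)}$ and $P(U = -1) = \frac{1}{2} - \frac{w - c}{2 r \alpha(\epsilon)}$. Then $Q$ is the unique binary-output stochastic quantizer satisfying conditions (C1)–(C3).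
   Context: In condition (C3) the minimization is over binary-output stochastic quantizers (including the choice of the output values $\gamma_1, \gamma_2$) satisfying the other conditions, and it is required to hold simultaneously at every input $w$. *)

From Stdlib Require Import Reals.
Open Scope R_scope.

Definition alpha (eps : R) : R := (exp eps + 1) / (exp eps - 1).

Definition in_dom (c r w : R) : Prop := c - r <= w <= c + r.

(* A binary-output stochastic quantizer Q : [c-r,c+r] -> {g1,g2} is given by
   its output values g1 g2 and, for each input w, the probability p w that
   Q(w) = g1 (so Q(w) = g2 with probability 1 - p w). *)
Definition is_quantizer (c r g1 g2 : R) (p : R -> R) : Prop :=
  forall w, in_dom c r w -> 0 <= p w <= 1.

Definition law (g1 g2 : R) (p : R -> R) (w x : R) : R :=
  (if Req_EM_T x g1 then p w else 0) + (if Req_EM_T x g2 then 1 - p w else 0).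

Definition expect (g1 g2 : R) (p : R -> R) (w : R) : R :=
  p w * g1 + (1 - p w) * g2.

Definition mse (g1 g2 : R) (p : R -> R) (w : R) : R :=
  p w * (g1 - w) ^ 2 + (1 - p w) * (g2 - w) ^ 2.

Definition C1 (c r g1 g2 : R) (p : R -> R) : Prop :=
  forall w, in_dom c r w -> expect g1 g2 p w = w.

(* (C2) eps-PLDP, ratio bound written multiplicatively:
   P(Q(w)=x) <= e^eps * P(Q(w')=x) *)
Definition C2 (c r eps g1 g2 : R) (p : R -> R) : Prop :=
  forall x w w', (x = g1 \/ x = g2) -> in_dom c r w -> in_dom c r w' ->
    law g1 g2 p w x <= exp eps * law g1 g2 p w' x.

Definition C3 (c r eps g1 g2 : R) (p : R -> R) : Prop :=
  forall h1 h2 (q : R -> R), is_quantizer c r h1 h2 q ->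
    C1 c r h1 h2 q -> C2 c r eps h1 h2 q ->
    forall w, in_dom c r w -> mse g1 g2 p w <= mse h1 h2 q w.

Definition good_quantizer (c r eps g1 g2 : R) (p : R -> R) : Prop :=
  is_quantizer c r g1 g2 p /\ C1 c r g1 g2 p /\ C2 c r eps g1 g2 p /\
  C3 c r eps g1 g2 p.

Definition qs_g1 (c r eps : R) : R := c + r * alpha eps.
Definition qs_g2 (c r eps : R) : R := c - r * alpha eps.
Definition qs_p (c r eps : R) (w : R) : R := / 2 + (w - c) / (2 * r * alpha eps).

(** Unbiasedness forces distinct outputs, say [g2 < g1] (swapping the outputs
    and complementing the probability changes nothing), and the probability
    [(w - g2) / (g1 - g2)] of [g1], so the MSE at [w] is [(g1 - w) (w - g2)].
    Writing the eps-PLDP constraints at the two endpoints [c - r] and [c + r]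
    gives [g2 <= c - r alpha] and [c + r alpha <= g1], where [alpha] is exactly
    the value for which the extreme probabilities of the proposed quantizer
    have ratio [e^eps].  Hence its MSE [(c + r alpha - w) (w - c + r alpha)] is
    a lower bound for every admissible quantizer, and equality at [w = c]
    pins down the outputs, after which unbiasedness pins down the law. *)

From Stdlib Require Import Reals Lra Psatz.
Open Scope R_scope.

Lemma exp_gt1 (eps : R) : 0 < eps -> 1 < exp eps.
Proof. intro heps; rewrite <- exp_0; apply exp_increasing; exact heps. Qed.

Lemma alpha_gt1 (eps : R) : 0 < eps -> 1 < alpha eps.
Proof.
  intro heps; pose proof (exp_gt1 eps heps).
  unfold alpha; apply (Rmult_lt_reg_r (exp eps - 1)); [lra|].
  field_simplify; lra.
Qed.

Lemma alpha_succ (eps : R) : 0 < eps -> alpha eps + 1 = exp eps * (alpha eps - 1).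
Proof. intro heps; pose proof (exp_gt1 eps heps); unfold alpha; field; lra. Qed.

Lemma ratio_le_exp (eps u v : R) : 0 < eps ->
  2 * alpha eps * u <= alpha eps + 1 -> alpha eps - 1 <= 2 * alpha eps * v ->
  u <= exp eps * v.
Proof.
  intros heps hu hv; pose proof (alpha_gt1 eps heps); pose proof (exp_gt1 eps heps).
  apply (Rmult_le_reg_l (2 * alpha eps)); [lra|].
  rewrite (alpha_succ eps heps) in hu; nra.
Qed.

Section BinaryQuantizer.

Variables h1 h2 : R.
Variable q : R -> R.

Lemma law_fst (w : R) : h1 <> h2 -> law h1 h2 q w h1 = q w.
Proof.
  intro hne; unfold law.
  destruct (Req_EM_T h1 h1); destruct (Req_EM_T h1 h2); lra.
Qed.

Lemma law_snd (w : R) : h1 <> h2 -> law h1 h2 q w h2 = 1 - q w.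
Proof.
  intro hne; unfold law.
  destruct (Req_EM_T h2 h1) as [e|]; [congruence|].
  destruct (Req_EM_T h2 h2); lra.
Qed.

Lemma law_swap (w x : R) : law h2 h1 (fun w => 1 - q w) w x = law h1 h2 q w x.
Proof. unfold law; destruct (Req_EM_T x h1); destruct (Req_EM_T x h2); ring. Qed.

Lemma law_ext (q' : R -> R) (w x : R) : q w = q' w -> law h1 h2 q w x = law h1 h2 q' w x.
Proof. intro e; unfold law; rewrite e; reflexivity. Qed.

Lemma mse_swap (w : R) : mse h2 h1 (fun w => 1 - q w) w = mse h1 h2 q w.
Proof. unfold mse; ring. Qed.

Lemma unbiased_prob (w : R) : expect h1 h2 q w = w -> q w * (h1 - h2) = w - h2.
Proof. unfold expect; intro e; lra. Qed.

Lemma unbiased_prob_unique (q' : R -> R) (w : R) : h1 <> h2 ->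
  expect h1 h2 q w = w -> expect h1 h2 q' w = w -> q w = q' w.
Proof.
  unfold expect; intros hne e e'.
  apply (Rmult_eq_reg_r (h1 - h2)); lra.
Qed.

Lemma mse_unbiased (w : R) : expect h1 h2 q w = w -> mse h1 h2 q w = (h1 - w) * (w - h2).
Proof.
  intro e; apply unbiased_prob in e.
  replace (mse h1 h2 q w) with
    ((h1 - w) * (w - h2) + (q w * (h1 - h2) - (w - h2)) * (h1 + h2 - 2 * w))
    by (unfold mse; ring).
  rewrite e; ring.
Qed.

Variables c r eps : R.

Lemma C1_swap : C1 c r h1 h2 q -> C1 c r h2 h1 (fun w => 1 - q w).
Proof. intros e w hw; pose proof (e w hw); unfold expect in *; lra. Qed.

Lemma C2_swap : C2 c r eps h1 h2 q -> C2 c r eps h2 h1 (fun w => 1 - q w).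
Proof. intros h x w w' hx hw hw'; rewrite !law_swap; apply h; tauto. Qed.

End BinaryQuantizer.

Section Admissible.

Variables c r eps : R.
Hypothesis hr : 0 < r.
Hypothesis heps : 0 < eps.

Local Notation qs1 := (qs_g1 c r eps).
Local Notation qs2 := (qs_g2 c r eps).
Local Notation qsp := (qs_p c r eps).

Let dom_lo : in_dom c r (c - r). Proof. unfold in_dom; lra. Qed.
Let dom_hi : in_dom c r (c + r). Proof. unfold in_dom; lra. Qed.
Let dom_mid : in_dom c r c. Proof. unfold in_dom; lra. Qed.

Let radius_pos : 0 < r * alpha eps.
Proof. pose proof (alpha_gt1 eps heps); nra. Qed.

Lemma unbiased_outputs_neq h1 h2 q : C1 c r h1 h2 q -> h1 <> h2.
Proof.
  intros e hh; pose proof (e _ dom_lo); pose proof (e _ dom_hi).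
  unfold expect in *; subst; lra.
Qed.

Lemma admissible_wlog (P : R -> R -> (R -> R) -> Prop) :
  (forall h1 h2 q, P h2 h1 (fun w => 1 - q w) -> P h1 h2 q) ->
  (forall h1 h2 q, C1 c r h1 h2 q -> C2 c r eps h1 h2 q -> h2 < h1 -> P h1 h2 q) ->
  forall h1 h2 q, C1 c r h1 h2 q -> C2 c r eps h1 h2 q -> P h1 h2 q.
Proof.
  intros Pswap Pord h1 h2 q e pldp.
  pose proof (unbiased_outputs_neq h1 h2 q e) as hne.
  destruct (Rlt_or_le h2 h1) as [hlt | hle]; [now apply Pord|].
  apply Pswap, Pord; [now apply C1_swap | now apply C2_swap | lra].
Qed.

Lemma pldp_outputs_bracket h1 h2 q :
  C1 c r h1 h2 q -> C2 c r eps h1 h2 q -> h2 < h1 ->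
  h2 <= qs2 /\ qs1 <= h1.
Proof.
  intros e pldp hlt.
  pose proof (exp_gt1 eps heps).
  pose proof (alpha_succ eps heps).
  assert (hne : h1 <> h2) by lra.
  pose proof (unbiased_prob _ _ _ _ (e _ dom_lo)) as qlo.
  pose proof (unbiased_prob _ _ _ _ (e _ dom_hi)) as qhi.
  pose proof (pldp h1 _ _ (or_introl eq_refl) dom_hi dom_lo) as p1.
  pose proof (pldp h2 _ _ (or_intror eq_refl) dom_lo dom_hi) as p2.
  rewrite !law_fst in p1 by exact hne; rewrite !law_snd in p2 by exact hne.
  apply (Rmult_le_compat_r (h1 - h2)) in p1, p2; try lra.
  unfold qs_g1, qs_g2; split; apply (Rmult_le_reg_r (exp eps - 1)); nra.
Qed.

Lemma qs_outputs_lt : qs2 < qs1.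
Proof. unfold qs_g1, qs_g2; lra. Qed.

Lemma qs_unbiased : C1 c r qs1 qs2 qsp.
Proof.
  pose proof (alpha_gt1 eps heps).
  intros w _; unfold expect, qs_p, qs_g1, qs_g2; field; split; lra.
Qed.

Lemma qs_mse w : in_dom c r w ->
  mse qs1 qs2 qsp w = (qs1 - w) * (w - qs2).
Proof. intro hw; apply mse_unbiased, qs_unbiased, hw. Qed.

Lemma qs_p_bounds w : in_dom c r w ->
  alpha eps - 1 <= 2 * alpha eps * qsp w <= alpha eps + 1.
Proof.
  unfold in_dom; intro hw; pose proof (alpha_gt1 eps heps).
  replace (2 * alpha eps * qsp w) with (alpha eps + (w - c) / r)
    by (unfold qs_p; field; lra).
  assert (-1 <= (w - c) / r <= 1).
  { split; [apply (Rmult_le_reg_r r) | apply (Rmult_le_reg_r r)]; try lra;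
      field_simplify; lra. }
  lra.
Qed.

Lemma qs_quantizer : is_quantizer c r qs1 qs2 qsp.
Proof.
  intros w hw; pose proof (qs_p_bounds w hw); pose proof (alpha_gt1 eps heps).
  split; nra.
Qed.

Lemma qs_pldp : C2 c r eps qs1 qs2 qsp.
Proof.
  pose proof qs_outputs_lt as hlt.
  intros x w w' [-> | ->] hw hw';
    pose proof (qs_p_bounds w hw); pose proof (qs_p_bounds w' hw');
    [rewrite !law_fst by lra | rewrite !law_snd by lra];
    apply ratio_le_exp; lra.
Qed.

Lemma admissible_mse_lower_bound h1 h2 q w :
  C1 c r h1 h2 q -> C2 c r eps h1 h2 q -> in_dom c r w ->
  mse qs1 qs2 qsp w <= mse h1 h2 q w.
Proof.
  intros e pldp hw; rewrite (qs_mse w hw); revert h1 h2 q e pldp.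
  apply admissible_wlog.
  - intros h1 h2 q; rewrite mse_swap; intro h; exact h.
  - intros h1 h2 q e pldp hlt.
    destruct (pldp_outputs_bracket h1 h2 q e pldp hlt).
    rewrite (mse_unbiased _ _ _ _ (e w hw)).
    unfold in_dom in hw; pose proof (alpha_gt1 eps heps).
    assert (w - qs2 >= 0 /\ qs1 - w >= 0)
      by (unfold qs_g1, qs_g2; split; nra).
    nra.
Qed.

Lemma qs_good : good_quantizer c r eps qs1 qs2 qsp.
Proof.
  split; [exact qs_quantizer|]; split; [exact qs_unbiased|]; split; [exact qs_pldp|].
  intros h1 h2 q _ e pldp w hw; exact (admissible_mse_lower_bound h1 h2 q w e pldp hw).
Qed.

Lemma mse_optimal_outputs h1 h2 q :
  C1 c r h1 h2 q -> C2 c r eps h1 h2 q -> h2 < h1 ->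
  mse h1 h2 q c <= mse qs1 qs2 qsp c ->
  h1 = qs1 /\ h2 = qs2.
Proof.
  intros e pldp hlt hm.
  destruct (pldp_outputs_bracket h1 h2 q e pldp hlt) as [b2 b1].
  rewrite (qs_mse c dom_mid), (mse_unbiased _ _ _ _ (e c dom_mid)) in hm.
  unfold qs_g1, qs_g2 in *.
  set (a := r * alpha eps) in *.
  assert (h1 - c = a /\ c - h2 = a) by (split; nra).
  lra.
Qed.

Lemma mse_optimal_law h1 h2 q :
  C1 c r h1 h2 q -> C2 c r eps h1 h2 q ->
  mse h1 h2 q c <= mse qs1 qs2 qsp c ->
  forall w x, in_dom c r w ->
  law h1 h2 q w x = law qs1 qs2 qsp w x.
Proof.
  revert h1 h2 q.
  apply (admissible_wlog (fun h1 h2 q =>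
    mse h1 h2 q c <= mse qs1 qs2 qsp c ->
    forall w x, in_dom c r w ->
    law h1 h2 q w x = law qs1 qs2 qsp w x)).
  - intros h1 h2 q P hm w x hw.
    rewrite <- law_swap; apply P; [rewrite mse_swap|]; assumption.
  - intros h1 h2 q e pldp hlt hm w x hw.
    destruct (mse_optimal_outputs h1 h2 q e pldp hlt hm) as [-> ->].
    apply law_ext, (unbiased_prob_unique _ _ _ _ _ (Rgt_not_eq _ _ qs_outputs_lt));
      [exact (e w hw) | exact (qs_unbiased w hw)].
Qed.

Lemma good_quantizer_law g1 g2 p w x :
  good_quantizer c r eps g1 g2 p -> in_dom c r w ->
  law g1 g2 p w x = law qs1 qs2 qsp w x.
Proof.
  intros [_ [e [pldp optimal]]] hw.
  apply mse_optimal_law; [exact e | exact pldp | | exact hw].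
  apply optimal; [exact qs_quantizer | exact qs_unbiased | exact qs_pldp | exact dom_mid].
Qed.

End Admissible.

Theorem proposition1 (c r eps : R) (hc : 0 < c) (hr : 0 < r) (heps : 0 < eps) :
  good_quantizer c r eps (qs_g1 c r eps) (qs_g2 c r eps) (qs_p c r eps) /\
  (forall g1 g2 (p : R -> R), good_quantizer c r eps g1 g2 p ->
     forall w, in_dom c r w -> forall x,
       law g1 g2 p w x = law (qs_g1 c r eps) (qs_g2 c r eps) (qs_p c r eps) w x).
Proof.
  split; [exact (qs_good c r eps hr heps)|].
  intros g1 g2 p good w hw x.
  exact (good_quantizer_law c r eps hr heps g1 g2 p w x good hw).
Qed.
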